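(* Fix a conic $\mathcal H$ containing points $A, B, C$, and a line $\ell$ containing a point $D$. For a point $E$ varying on $\mathcal H$, let the conic $\mathcal E$ through $A,B,C,D,E$ meet $\ell$ at $F \neq D$. Then line $EF$ passes through a fixed point $G$ on $\mathcal H$ (independent of $E$). *)

(* Points: nonzero row vectors in R^3 (homogeneous coordinates). *)
From HB Require Import structures.
From mathcomp Require Import all_boot all_order all_algebra.
From mathcomp Require Import reals.

Set Implicit Arguments.
Unset Strict Implicit.
Unset Printing Implicit Defensive.

Import GRing.Theory Num.Theory.
Local Open Scope ring_scope.

Section Proj.
Variable R : fieldType.

Definition qform (M : 'M[R]_3) (x : 'rV[R]_3) : R := (x *m M *m x^T) 0 0.

Definition is_conic (M : 'M[R]_3) : Prop := M^T = M /\ M != 0.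

Definition nondeg_conic (M : 'M[R]_3) : Prop := is_conic M /\ \det M != 0.

Definition on_conic (M : 'M[R]_3) (x : 'rV[R]_3) : Prop := qform M x = 0.

Definition on_line (l x : 'rV[R]_3) : Prop := (x *m l^T) 0 0 = 0.

Definition proj_eq (x y : 'rV[R]_3) : Prop := exists k : R, k != 0 /\ y = k *: x.

Definition collinear3 (x y z : 'rV[R]_3) : Prop :=
  \det (col_mx x (col_mx y z) : 'M[R]_3) = 0.

End Proj.

(* Take A, B, C as reference points, their coordinates scaled ([frame]) so that
   the conic H becomes the Steiner conic x0 x1 + x0 x2 + x1 x2 = 0.  Conics through
   the three vertices are then the curves w . cremona x = 0, where
   cremona x = (x1 x2, x0 x2, x0 x1) is the quadratic Cremona map.  Parametrize l
   as s D + t Z with Z := l x D: such a conic, if it also passes through D,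
   restricts to l as t (s T + t K), so its second point F on l has
   s T + t K = 0.  The fixed point is G := cremona (l o D) (o the Hadamard
   product), which lies on H because l . D = 0, and
   det (E, F, G) = s det (E, D, G) + t det (E, Z, G) vanishes because
   K det (E, D, G) = T det (E, Z, G), a polynomial identity once cremona E lies on
   the line a0 + a1 + a2 = 0, the Cremona image of H.  If cremona (l o D) = 0, then
   l is a side of the triangle and every conic through A, B, C, D contains it, so
   no F exists. *)

From HB Require Import structures.
From mathcomp Require Import all_boot all_order all_algebra.
From mathcomp Require Import reals.
From mathcomp Require Import ring lra.

Set Implicit Arguments.
Unset Strict Implicit.
Unset Printing Implicit Defensive.

Import Order.TTheory GRing.Theory Num.Theory.
Local Open Scope ring_scope.

Definition i0 : 'I_3 := Ordinal (isT : (0 < 3)%N).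
Definition i1 : 'I_3 := Ordinal (isT : (1 < 3)%N).
Definition i2 : 'I_3 := Ordinal (isT : (2 < 3)%N).

Lemma ord3P (i : 'I_3) : [\/ i = i0, i = i1 | i = i2].
Proof.
by case: i => [[|[|[|//]]] ?]; [constructor 1 | constructor 2 | constructor 3];
  apply/val_inj.
Qed.

Section Coordinates.
Variable R : nzRingType.
Implicit Types (x y z : 'rV[R]_3) (a b c : R).

Definition row3 a b c : 'rV[R]_3 := \row_(i < 3) [:: a; b; c]`_i.
Definition dot x y := x 0 i0 * y 0 i0 + x 0 i1 * y 0 i1 + x 0 i2 * y 0 i2.
Definition cross x y := row3 (x 0 i1 * y 0 i2 - x 0 i2 * y 0 i1)
  (x 0 i2 * y 0 i0 - x 0 i0 * y 0 i2) (x 0 i0 * y 0 i1 - x 0 i1 * y 0 i0).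
Definition triple x y z := dot x (cross y z).
Definition hadamard x y := row3 (x 0 i0 * y 0 i0) (x 0 i1 * y 0 i1) (x 0 i2 * y 0 i2).
Definition cremona x := row3 (x 0 i1 * x 0 i2) (x 0 i0 * x 0 i2) (x 0 i0 * x 0 i1).
Definition cremona_polar x y := row3 (x 0 i1 * y 0 i2 + x 0 i2 * y 0 i1)
  (x 0 i0 * y 0 i2 + x 0 i2 * y 0 i0) (x 0 i0 * y 0 i1 + x 0 i1 * y 0 i0).
Definition steiner x := dot (row3 1 1 1) (cremona x).
Definition rows3 x y z : 'M[R]_3 := \matrix_(i, j) [:: x; y; z]`_i 0 j.
(* The zero vector counts as a vertex. *)
Definition is_vertex x := [\/ x 0 i1 = 0 /\ x 0 i2 = 0, x 0 i0 = 0 /\ x 0 i2 = 0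
  | x 0 i0 = 0 /\ x 0 i1 = 0].
Definition bform (M : 'M[R]_3) x y := (x *m M *m y^T) 0 0.

End Coordinates.

Ltac coords := rewrite /triple /steiner /dot /cross /hadamard /cremona /cremona_polar /row3 ?mxE /=.

Section Identities.
Variable R : comNzRingType.
Implicit Types (d l x y z u v w : 'rV[R]_3) (a b c k : R).

Lemma row3P x y : x 0 i0 = y 0 i0 -> x 0 i1 = y 0 i1 -> x 0 i2 = y 0 i2 -> x = y.
Proof. by move=> h0 h1 h2; apply/rowP => i; case: (ord3P i) => ->. Qed.

Lemma dotC x y : dot x y = dot y x. Proof. by coords; ring. Qed.
Lemma dotDl x y u : dot (x + y) u = dot x u + dot y u. Proof. by coords; ring. Qed.
Lemma dotDr x y u : dot u (x + y) = dot u x + dot u y. Proof. by coords; ring. Qed.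
Lemma dotZl k x y : dot (k *: x) y = k * dot x y. Proof. by coords; ring. Qed.
Lemma dotZr k x y : dot x (k *: y) = k * dot x y. Proof. by coords; ring. Qed.
Lemma dot0l x : dot 0 x = 0. Proof. by coords; ring. Qed.

Lemma cross_cross w u v : cross w (cross u v) = dot w v *: u - dot w u *: v.
Proof. by apply: row3P; coords; ring. Qed.

Lemma crossC x y : cross y x = - cross x y.
Proof. by apply: row3P; coords; ring. Qed.

Lemma cross0r x : cross x 0 = 0.
Proof. by apply: row3P; coords; ring. Qed.

Lemma lagrange_identity x y :
  dot (cross x y) (cross x y) = dot x x * dot y y - dot x y ^+ 2.
Proof. by coords; ring. Qed.

Lemma orth_cross_parallel w x y (v := cross x y) :
  dot w x = 0 -> dot w y = 0 -> dot v v *: w = dot v w *: v.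
Proof.
move=> wx wy; have wv : cross w v = 0 by rewrite cross_cross wx wy !scale0r subr0.
by apply/eqP; rewrite -subr_eq0 -cross_cross wv cross0r.
Qed.

Lemma cramer3 u v t y :
  triple u v t *: y = triple y v t *: u + triple u y t *: v + triple u v y *: t.
Proof. by apply: row3P; coords; ring. Qed.

Lemma tripleZ2 k x y z : triple x (k *: y) z = k * triple x y z.
Proof. by coords; ring. Qed.

Lemma tripleD2 x y y' z : triple x (y + y') z = triple x y z + triple x y' z.
Proof. by coords; ring. Qed.

Lemma tripleZ13 k k' x y z : triple (k *: x) y (k' *: z) = k * k' * triple x y z.
Proof. by coords; ring. Qed.

Lemma dot_cremonaD w a b x y : dot w (cremona (a *: x + b *: y)) =
  a ^+ 2 * dot w (cremona x) + a * b * dot w (cremona_polar x y) + b ^+ 2 * dot w (cremona y).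
Proof. by coords; ring. Qed.

Lemma cremonaZ k x : cremona (k *: x) = k ^+ 2 *: cremona x.
Proof. by apply: row3P; coords; ring. Qed.

Lemma cremonaK x : cremona (cremona x) = (x 0 i0 * x 0 i1 * x 0 i2) *: x.
Proof. by apply: row3P; coords; ring. Qed.

Lemma cross_cremona x y : cross (cremona x) (cremona y) = - hadamard (hadamard x y) (cross x y).
Proof. by apply: row3P; coords; ring. Qed.

Lemma hadamardZl k x y : hadamard (k *: x) y = k *: hadamard x y.
Proof. by apply: row3P; coords; ring. Qed.

Lemma steiner_cremona_hadamard x y :
  steiner (cremona (hadamard x y)) =
  x 0 i0 * y 0 i0 * (x 0 i1 * y 0 i1) * (x 0 i2 * y 0 i2) * dot x y.
Proof. by coords; ring. Qed.

Lemma triple_cross_line l d x : triple d (cross l d) x = dot d d * dot l x - dot d l * dot d x.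
Proof. by coords; ring. Qed.

(* Read a as cremona e: the Steiner conic becomes the line a0 + a1 + a2 = 0 and
   cremona a is e up to a scalar.  Likewise cross d z is l up to a scalar when
   z = cross l d and l . d = 0. *)
Lemma cremona_polar_key (d z a : 'rV[R]_3) : a 0 i0 + a 0 i1 + a 0 i2 = 0 ->
  let v := cross (cremona d) a in let g := cremona (hadamard (cross d z) d) in
  dot v (cremona z) * triple (cremona a) d g =
  dot v (cremona_polar d z) * triple (cremona a) z g.
Proof.
move=> a_sum v g; rewrite {}/v {}/g; coords.
have -> : a 0 i2 = - a 0 i0 - a 0 i1 by rewrite -[RHS]addr0 -a_sum; ring.
ring.
Qed.

Lemma sum3 (F : 'I_3 -> R) : \sum_(i < 3) F i = F i0 + F i1 + F i2.
Proof. by rewrite !big_ord_recl big_ord0 addr0 addrA; congr (F _ + F _ + F _); exact/val_inj. Qed.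

Lemma row3E x : row3 (x 0 i0) (x 0 i1) (x 0 i2) = x.
Proof. by apply: row3P; rewrite /row3 !mxE. Qed.

Lemma mul_rows3 v x y z : v *m rows3 x y z = v 0 i0 *: x + v 0 i1 *: y + v 0 i2 *: z.
Proof. by apply/rowP => j; rewrite !mxE sum3 !mxE. Qed.

Lemma mulmx_rows3 x y z M : rows3 x y z *m M = rows3 (x *m M) (y *m M) (z *m M).
Proof.
apply/matrixP => i j; rewrite !mxE.
by case: (ord3P i) => -> /=; rewrite mxE; apply: eq_bigr => k _; rewrite mxE.
Qed.

Lemma col_mx3 x y z : col_mx x (col_mx y z) = rows3 x y z.
Proof.
apply/matrixP => i j; rewrite [RHS]mxE; case: (ord3P i) => ->.
- rewrite (_ : i0 = @lshift 1 (1 + 1) ord0); last exact/val_inj.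
  exact: col_mxEu.
- rewrite (_ : i1 = @rshift 1 (1 + 1) (@lshift 1 1 ord0)); last exact/val_inj.
  rewrite (@col_mxEd _ 1 (1 + 1)); exact: col_mxEu.
- rewrite (_ : i2 = @rshift 1 (1 + 1) (@rshift 1 1 ord0)); last exact/val_inj.
  rewrite (@col_mxEd _ 1 (1 + 1)); exact: col_mxEd.
Qed.

Lemma det_rows3 x y z : \det (rows3 x y z) = triple x y z.
Proof.
rewrite -[x]row3E -[y]row3E -[z]row3E (expand_det_row _ ord0) !big_ord_recl big_ord0.
rewrite /cofactor !(expand_det_row _ ord0) !big_ord_recl !big_ord0 /cofactor /=.
by rewrite !det_mx11 !mxE /=; coords; ring.
Qed.

Lemma dotE x y : (x *m y^T) 0 0 = dot x y.
Proof. by rewrite mxE sum3 !mxE. Qed.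

Lemma bformE M x y : bform M x y = dot (x *m M) y.
Proof. exact: dotE. Qed.

Lemma bformZl M k x y : bform M (k *: x) y = k * bform M x y.
Proof. by rewrite !bformE -scalemxAl dotZl. Qed.

Lemma bformZr M k x y : bform M x (k *: y) = k * bform M x y.
Proof. by rewrite !bformE dotZr. Qed.

Lemma bform_sym M x y : M^T = M -> bform M x y = bform M y x.
Proof.
move=> sM; transitivity ((x *m M *m y^T)^T 0 0); first by rewrite mxE.
by rewrite !trmx_mul trmxK sM mulmxA.
Qed.

Lemma bform_rows3l M v U V W y : bform M (v *m rows3 U V W) y =
  v 0 i0 * bform M U y + v 0 i1 * bform M V y + v 0 i2 * bform M W y.
Proof. by rewrite !bformE mul_rows3 !mulmxDl -!scalemxAl !dotDl !dotZl. Qed.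

End Identities.

Section ProjectivePlane.
Variable R : realFieldType.
Implicit Types (d e f g l x y z u v w A B C U V W X Y : 'rV[R]_3) (a b c k : R) (M N P : 'M[R]_3).

Lemma qformE M x : qform M x = bform M x x. Proof. by []. Qed.

Lemma qform_rows3 M v U V W : M^T = M ->
  on_conic M U -> on_conic M V -> on_conic M W ->
  qform M (v *m rows3 U V W) =
  2 * dot (row3 (bform M V W) (bform M U W) (bform M U V)) (cremona v).
Proof.
rewrite /on_conic !qformE => sM qU qV qW.
set X := v *m rows3 U V W.
rewrite {1}/X bform_rows3l (bform_sym U X sM) (bform_sym V X sM) (bform_sym W X sM).
rewrite {}/X !bform_rows3l.
rewrite (bform_sym V U sM) (bform_sym W U sM) (bform_sym W V sM) qU qV qW.
by coords; ring.
Qed.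

Lemma on_line_mulmx l v M : on_line l (v *m M) = on_line (l *m M^T) v.
Proof. by rewrite /on_line trmx_mul trmxK mulmxA. Qed.

Lemma on_lineE l x : on_line l x <-> dot l x = 0.
Proof. by rewrite /on_line dotE dotC. Qed.

Lemma on_conicZ N k x : on_conic N x -> on_conic N (k *: x).
Proof. by rewrite /on_conic !qformE bformZl bformZr => ->; rewrite !mulr0. Qed.

Lemma dot_gt0 x : x != 0 -> 0 < dot x x.
Proof.
apply: contraNT; rewrite -leNgt /dot => le0.
have := sqr_ge0 (x 0 i0); have := sqr_ge0 (x 0 i1); have := sqr_ge0 (x 0 i2).
rewrite !expr2 => h2 h1 h0.
by apply/eqP; apply: row3P; rewrite mxE; apply/eqP; rewrite -sqrf_eq0 expr2; apply/eqP; lra.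
Qed.

Lemma proj_eqZ a b x y : a != 0 -> y != 0 -> a *: y = b *: x -> proj_eq x y.
Proof.
move=> a0 y0 e; exists (b / a); split; last by rewrite -[y](scalerK a0) e scalerA mulrC.
rewrite mulf_neq0 ?invr_neq0 //; apply: contraNneq y0 => b0.
by move/eqP: e; rewrite b0 scale0r scaler_eq0 (negbTE a0).
Qed.

Lemma proj_eq_scale k x : k *: x != 0 -> proj_eq x (k *: x).
Proof. by move=> kx0; exists k; split=> //; apply: contraNneq kx0 => ->; rewrite scale0r. Qed.

Lemma proj_eq_sym x y : proj_eq x y -> proj_eq y x.
Proof.
case=> k [k0 ->]; exists k^-1; split; first by rewrite invr_neq0.
by rewrite scalerA mulVf // scale1r.
Qed.

Lemma proj_eq_orth u x y : proj_eq x y -> dot u x = 0 -> dot u y = 0.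
Proof. by case=> k [_ ->]; rewrite dotZr => ->; rewrite mulr0. Qed.

Lemma proj_eq_mulmx P x y : P \in unitmx -> proj_eq (x *m P) (y *m P) <-> proj_eq x y.
Proof.
move=> uP; split=> -[k [k0 e]]; exists k; split=> //.
  by rewrite -[y](mulmxK uP) e -scalemxAl mulmxK.
by rewrite e scalemxAl.
Qed.

Lemma cross_eq0_proj_eq x y : x != 0 -> y != 0 -> cross x y = 0 -> proj_eq x y.
Proof.
move=> x0 y0 xy; apply: (@proj_eqZ _ (dot x y) _ _ (lt0r_neq0 (dot_gt0 x0)) y0).
have := cross_cross x y x; rewrite (crossC x y) xy oppr0 cross0r => /esym/eqP.
by rewrite subr_eq0 => /eqP.
Qed.

Lemma conic_points_not_conjugate M X Y : M^T = M -> M \in unitmx -> X != 0 -> Y != 0 ->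
  on_conic M X -> on_conic M Y -> ~ proj_eq X Y -> bform M X Y != 0.
Proof.
rewrite /on_conic !qformE !bformE => sM uM X0 Y0 qX qY nXY; apply/eqP => bXY.
have bYX : dot (Y *m M) X = 0 by rewrite -bformE bform_sym // bformE.
(* X M and Y M are both orthogonal to X and Y, hence parallel; M being
   invertible, so are X and Y. *)
set n := cross X Y.
have n0 : n != 0 by apply/eqP => /(cross_eq0_proj_eq X0 Y0).
have nn0 := lt0r_neq0 (dot_gt0 n0).
have parX := orth_cross_parallel qX bXY; have parY := orth_cross_parallel bYX qY.
have nX0 : dot n (X *m M) != 0.
  apply: contra_neq X0 => nX; move: parX; rewrite -/n nX scale0r => /eqP.
  by rewrite scaler_eq0 (negbTE nn0) /= mulmx_free_eq0 ?row_free_unit // => /eqP.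
have fM : row_free M by rewrite row_free_unit.
apply: nXY; apply: (@proj_eqZ _ (dot n (Y *m M)) _ _ nX0 Y0); apply/eqP.
rewrite -subr_eq0 -(mulmx_free_eq0 _ fM) mulmxBl -!scalemxAl; apply/eqP.
apply: (scalerI nn0); rewrite scaler0 scalerBr !scalerA mulrC [dot n n * _]mulrC.
by rewrite -!scalerA -/n parX parY !scalerA mulrC subrr.
Qed.

(* The scalings make the three off-diagonal coefficients of M in this basis
   equal, i.e. they turn M into the Steiner conic (see [on_conic_frame]). *)
Definition frame M A B C := rows3 (bform M B C *: A) (bform M A C *: B) (bform M A B *: C).

Lemma frame_vertex M A B C v X : is_vertex v -> X = v *m frame M A B C -> X != 0 ->
  [\/ proj_eq A X, proj_eq B X | proj_eq C X].
Proof.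
rewrite mul_rows3; case=> -[-> ->] ->; rewrite !scale0r ?addr0 ?add0r scalerA => X0;
  [constructor 1 | constructor 2 | constructor 3]; exact: proj_eq_scale.
Qed.

Lemma conic_through_frame M N A B C : N^T = N -> on_conic N A -> on_conic N B -> on_conic N C ->
  exists w, forall v, on_conic N (v *m frame M A B C) <-> dot w (cremona v) = 0.
Proof.
move=> sN nA nB nC; eexists => v.
rewrite /on_conic qform_rows3 //; do ?exact: on_conicZ.
by split=> [/eqP|->]; [rewrite mulf_eq0 pnatr_eq0 => /eqP; apply | rewrite mulr0].
Qed.

Section Frame.
Variables (M : 'M[R]_3) (A B C : 'rV[R]_3).
Hypotheses (sM : M^T = M) (hA : on_conic M A) (hB : on_conic M B) (hC : on_conic M C).
Hypotheses (a0 : bform M B C != 0) (b0 : bform M A C != 0) (c0 : bform M A B != 0).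

Lemma frame_unitmx : frame M A B C \in unitmx.
Proof.
rewrite unitmxE unitfE; apply/det0P => -[v v0 vP]; apply/negP: v0; rewrite negbK.
have bP X : bform M (v *m frame M A B C) X = 0 by rewrite vP /bform !mul0mx mxE.
move: (bP A) (bP B) (bP C); rewrite !bform_rows3l !bformZl.
rewrite (bform_sym B A sM) (bform_sym C A sM) (bform_sym C B sM).
move: hA hB hC; rewrite /on_conic !qformE => -> -> ->.
set a := bform M B C; set b := bform M A C; set c := bform M A B => eA eB eC.
have s12 : v 0 i1 + v 0 i2 = 0.
  have : b * c * (v 0 i1 + v 0 i2) = 0 by rewrite -eA; ring.
  by move/eqP; rewrite !mulf_eq0 (negbTE b0) (negbTE c0) => /eqP.
have s02 : v 0 i0 + v 0 i2 = 0.
  have : a * c * (v 0 i0 + v 0 i2) = 0 by rewrite -eB; ring.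
  by move/eqP; rewrite !mulf_eq0 (negbTE a0) (negbTE c0) => /eqP.
have s01 : v 0 i0 + v 0 i1 = 0.
  have : a * b * (v 0 i0 + v 0 i1) = 0 by rewrite -eC; ring.
  by move/eqP; rewrite !mulf_eq0 (negbTE a0) (negbTE b0) => /eqP.
by apply/eqP; apply: row3P; rewrite mxE; lra.
Qed.

Lemma on_conic_frame v : on_conic M (v *m frame M A B C) <-> steiner v = 0.
Proof.
rewrite /on_conic qform_rows3 //; do ?exact: on_conicZ.
rewrite !bformZl !bformZr.
rewrite (_ : dot _ (cremona v) = bform M B C * bform M A C * bform M A B * steiner v).
  split=> [/eqP|->]; last by rewrite !mulr0.
  by rewrite !mulf_eq0 pnatr_eq0 (negbTE a0) (negbTE b0) (negbTE c0) => /eqP.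
by coords; ring.
Qed.

End Frame.

Lemma steiner_frame M A B C : M^T = M -> M \in unitmx -> A != 0 -> B != 0 -> C != 0 ->
  on_conic M A -> on_conic M B -> on_conic M C ->
  ~ proj_eq A B -> ~ proj_eq A C -> ~ proj_eq B C ->
  frame M A B C \in unitmx /\ forall v, on_conic M (v *m frame M A B C) <-> steiner v = 0.
Proof.
move=> sM uM A0 B0 C0 hA hB hC nAB nAC nBC.
have a0 := conic_points_not_conjugate sM uM B0 C0 hB hC nBC.
have b0 := conic_points_not_conjugate sM uM A0 C0 hA hC nAC.
have c0 := conic_points_not_conjugate sM uM A0 B0 hA hB nAB.
by split; [exact: frame_unitmx | exact: on_conic_frame].
Qed.

Definition meets_only w l d f := forall x, x != 0 ->
  dot w (cremona x) = 0 -> dot l x = 0 -> proj_eq d x \/ proj_eq f x.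

Lemma meets_only_mulmx P N w l D F : P \in unitmx ->
  (forall v, on_conic N (v *m P) <-> dot w (cremona v) = 0) ->
  (forall X, X != 0 -> on_conic N X -> on_line l X -> proj_eq D X \/ proj_eq F X) ->
  meets_only w (l *m P^T) (D *m invmx P) (F *m invmx P).
Proof.
move=> uP onN only x x0 wx lx.
have X0 : x *m P != 0 by rewrite mulmx_free_eq0 ?row_free_unit.
have lX : on_line l (x *m P) by rewrite on_line_mulmx on_lineE.
have back Y : proj_eq Y (x *m P) -> proj_eq (Y *m invmx P) x.
  by move=> YX; apply/(proj_eq_mulmx _ _ uP); rewrite mulmxKV.
by case: (only _ X0 (proj2 (onN x) wx) lX) => /back; [left | right].
Qed.

Lemma meets_only_line_contra w l d f : l != 0 -> d != 0 -> dot l d = 0 ->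
  (forall x, dot l x = 0 -> dot w (cremona x) = 0) -> ~ meets_only w l d f.
Proof.
move=> l0 d0 ld full only; set z := cross l d.
have lz : dot l z = 0 by rewrite /z; coords; ring.
have zd : dot z d = 0 by rewrite /z; coords; ring.
have zz : 0 < dot z z by rewrite /z lagrange_identity ld expr0n subr0 mulr_gt0 ?dot_gt0.
have dd := dot_gt0 d0.
have zdz : dot z (d + z) = dot z z by rewrite dotDr zd add0r.
have ldz : dot l (d + z) = 0 by rewrite dotDr ld lz addr0.
have z0 : z != 0 by apply: contraTneq zz => ->; rewrite dot0l ltxx.
have dz0 : d + z != 0 by apply: contraTneq zz => dz0; rewrite -zdz dz0 dotC dot0l ltxx.
have [/proj_eq_orth/(_ zd)|fz] := only z z0 (full z lz) lz; first by move/eqP; rewrite gt_eqF.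
have [/proj_eq_orth/(_ zd)|fdz] := only _ dz0 (full _ ldz) ldz.
  by rewrite zdz => /eqP; rewrite gt_eqF.
have dzf : dot d f = 0 by apply: proj_eq_orth (proj_eq_sym fz) _; rewrite dotC.
by move/eqP: (proj_eq_orth fdz dzf); rewrite dotDr (dotC d z) zd addr0 gt_eqF.
Qed.

Lemma nonvertex_neq0 x : ~ is_vertex x -> x != 0.
Proof. by apply: contra_notN => /eqP ->; constructor 1; rewrite !mxE. Qed.

Lemma steiner_coord_neq0 e : steiner e = 0 -> ~ is_vertex e ->
  e 0 i0 * e 0 i1 * e 0 i2 != 0.
Proof.
rewrite /steiner; coords => He eV; rewrite !mulf_eq0 !negb_or -!andbA.
apply/and3P; split; apply/eqP => ei; apply: eV; rewrite ei in He.
- have /eqP : e 0 i1 * e 0 i2 = 0 by lra.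
  by rewrite mulf_eq0 => /orP[]/eqP ?; [constructor 3 | constructor 2].
- have /eqP : e 0 i0 * e 0 i2 = 0 by lra.
  by rewrite mulf_eq0 => /orP[]/eqP ?; [constructor 3 | constructor 1].
- have /eqP : e 0 i0 * e 0 i1 = 0 by lra.
  by rewrite mulf_eq0 => /orP[]/eqP ?; [constructor 2 | constructor 1].
Qed.

Lemma cremona_eq0 (p : 'rV[R]_3) : p 0 i0 + p 0 i1 + p 0 i2 = 0 -> cremona p = 0 -> p = 0.
Proof.
move=> p_sum hp; have c_ j := congr1 (fun u : 'rV_3 => u 0 j) hp.
move: (c_ i0) (c_ i1) (c_ i2); coords => c0 c1 c2.
by apply: row3P; rewrite mxE; apply/eqP; rewrite -sqrf_eq0; apply/eqP; nra.
Qed.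

Lemma cremona_cross_eq0 d e : ~ is_vertex d -> e 0 i0 * e 0 i1 * e 0 i2 != 0 ->
  cross (cremona d) (cremona e) = 0 -> proj_eq d e.
Proof.
rewrite !mulf_eq0 !negb_or -!andbA => dV /and3P[e0 e1 e2].
rewrite cross_cremona => /eqP; rewrite oppr_eq0 => /eqP h.
have h_ j := congr1 (fun u : 'rV_3 => u 0 j) h.
move: (h_ i0) (h_ i1) (h_ i2); coords => E0 E1 E2.
have d0 : d 0 i0 != 0.
  apply/eqP => di; apply: dV; have /eqP : d 0 i1 * d 0 i2 * (e 0 i0 * e 0 i1) = 0.
    by rewrite di in E1; lra.
  rewrite !mulf_eq0 (negbTE e0) (negbTE e1) !orbF.
  by case/orP => /eqP ?; [constructor 3 | constructor 2].
have d1 : d 0 i1 != 0.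
  apply/eqP => di; apply: dV; have /eqP : d 0 i0 * d 0 i2 * (e 0 i1 * e 0 i2) = 0.
    by rewrite di in E2; lra.
  rewrite !mulf_eq0 (negbTE e1) (negbTE e2) !orbF.
  by case/orP => /eqP ?; [constructor 3 | constructor 1].
have d2 : d 0 i2 != 0.
  apply/eqP => di; apply: dV; have /eqP : d 0 i0 * d 0 i1 * (e 0 i0 * e 0 i2) = 0.
    by rewrite di in E0; lra.
  rewrite !mulf_eq0 (negbTE e0) (negbTE e2) !orbF.
  by case/orP => /eqP ?; [constructor 2 | constructor 1].
have nz (x : 'rV[R]_3) i : x 0 i != 0 -> x != 0 by apply: contraNneq => ->; rewrite mxE.
apply: cross_eq0_proj_eq (nz _ _ d0) (nz _ _ e0) _; apply: row3P; coords.
- by apply: (mulfI (mulf_neq0 d0 e0)); rewrite mulr0; lra.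
- by apply: (mulfI (mulf_neq0 d1 e1)); rewrite mulr0; lra.
- by apply: (mulfI (mulf_neq0 d2 e2)); rewrite mulr0; lra.
Qed.

Lemma conic_contains_side w l d x : hadamard l d = 0 -> l != 0 -> ~ is_vertex d ->
  dot l x = 0 -> dot w (cremona d) = 0 -> dot w (cremona x) = 0.
Proof.
move=> hld l0 dV; have h_ j := congr1 (fun u : 'rV_3 => u 0 j) hld.
move: (h_ i0) (h_ i1) (h_ i2); coords => p0 p1 p2 lx wd.
have l_eq0 i : d 0 i != 0 -> l 0 i * d 0 i = 0 -> l 0 i = 0.
  by move=> di pi; apply: (mulIf di); rewrite mul0r.
have [d0|d0] := eqVneq (d 0 i0) 0.
  have d1 : d 0 i1 != 0 by apply/eqP => d1; apply: dV; constructor 3.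
  have d2 : d 0 i2 != 0 by apply/eqP => d2; apply: dV; constructor 2.
  have l1 := l_eq0 _ d1 p1; have l2 := l_eq0 _ d2 p2.
  have l0' : l 0 i0 != 0 by apply: contra_neq l0 => l0'; apply: row3P; rewrite mxE.
  have x0 : x 0 i0 = 0 by apply: (mulfI l0'); rewrite mulr0 -lx l1 l2; ring.
  have w0 : w 0 i0 = 0 by apply: (mulIf (mulf_neq0 d1 d2)); rewrite mul0r -wd d0; ring.
  by rewrite x0 w0; ring.
have l0' := l_eq0 _ d0 p0.
have [d1|d1] := eqVneq (d 0 i1) 0.
  have d2 : d 0 i2 != 0 by apply/eqP => d2; apply: dV; constructor 1.
  have l2 := l_eq0 _ d2 p2.
  have l1' : l 0 i1 != 0 by apply: contra_neq l0 => l1'; apply: row3P; rewrite mxE.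
  have x1 : x 0 i1 = 0 by apply: (mulfI l1'); rewrite mulr0 -lx l0' l2; ring.
  have w1 : w 0 i1 = 0 by apply: (mulIf (mulf_neq0 d0 d2)); rewrite mul0r -wd d1; ring.
  by rewrite x1 w1; ring.
have l1' := l_eq0 _ d1 p1.
have l2' : l 0 i2 != 0 by apply: contra_neq l0 => l2'; apply: row3P; rewrite mxE.
have d2 : d 0 i2 = 0 by apply: (mulfI l2'); rewrite mulr0.
have x2 : x 0 i2 = 0 by apply: (mulfI l2'); rewrite mulr0 -lx l0' l1'; ring.
have w2 : w 0 i2 = 0 by apply: (mulIf (mulf_neq0 d0 d1)); rewrite mul0r -wd d2; ring.
by rewrite x2 w2; ring.
Qed.

Lemma cremona_conic_relation l d e w : dot l d = 0 -> ~ is_vertex d ->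
  steiner e = 0 -> ~ is_vertex e -> ~ proj_eq d e ->
  dot w (cremona d) = 0 -> dot w (cremona e) = 0 ->
  let z := cross l d in let g := cremona (hadamard l d) in
  dot w (cremona z) * triple e d g = dot w (cremona_polar d z) * triple e z g.
Proof.
move=> ld dV He eV nde wd we z g.
have e3 := steiner_coord_neq0 He eV.
(* w is proportional to v, which reduces the claim to [cremona_polar_key]. *)
set v := cross (cremona d) (cremona e).
have v0 : v != 0 by apply/eqP => /(cremona_cross_eq0 dV e3).
have vw := orth_cross_parallel wd we; rewrite -/v in vw.
have e_sum : (cremona e) 0 i0 + (cremona e) 0 i1 + (cremona e) 0 i2 = 0.
  by rewrite -He /steiner; coords; ring.
have := cremona_polar_key d z e_sum; rewrite /= -/v cremonaK.
rewrite /z cross_cross (dotC d l) ld scale0r subr0 hadamardZl cremonaZ -/g.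
rewrite !tripleZ13 -/z => key.
set c := e 0 i0 * e 0 i1 * e 0 i2 * dot d d ^+ 2.
rewrite -/c in key.
have c0 : c != 0 by rewrite mulf_neq0 // expf_neq0 // lt0r_neq0 // dot_gt0 // nonvertex_neq0.
have vv0 := lt0r_neq0 (dot_gt0 v0).
have vwu u : dot v v * dot w u = dot v w * dot v u by rewrite -dotZl vw dotZl.
apply: (mulfI (mulf_neq0 vv0 c0)).
transitivity ((dot v v * dot w (cremona z)) * (c * triple e d g)); first by ring.
by rewrite vwu -mulrA key mulrA -vwu; ring.
Qed.

Lemma line_param l d x : dot l d = 0 -> dot l x = 0 ->
  (dot d d * dot l l) *: x = triple x (cross l d) l *: d + triple d x l *: cross l d.
Proof.
move=> ld lx; have := cramer3 d (cross l d) l x.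
by rewrite !triple_cross_line lx (dotC d l) ld !mul0r !mulr0 !subr0 scale0r addr0.
Qed.

Lemma comb_eq0_of_proportional (s t T K X Y : R) : s * T + t * K = 0 -> K * X = T * Y ->
  T != 0 \/ K != 0 -> s * X + t * Y = 0.
Proof.
move=> sTK KXY [T0|K0].
- apply: (mulfI T0); rewrite mulr0.
  transitivity (X * (s * T + t * K) + t * (T * Y - K * X)); first by ring.
  by rewrite sTK KXY subrr; ring.
- apply: (mulfI K0); rewrite mulr0.
  transitivity (Y * (s * T + t * K) + s * (K * X - T * Y)); first by ring.
  by rewrite sTK KXY subrr; ring.
Qed.

Lemma triple_second_meet l d e f w : l != 0 -> dot l d = 0 -> ~ is_vertex d ->
  steiner e = 0 -> ~ is_vertex e -> ~ proj_eq d e ->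
  dot w (cremona d) = 0 -> dot w (cremona e) = 0 ->
  f != 0 -> dot w (cremona f) = 0 -> dot l f = 0 -> ~ proj_eq d f -> meets_only w l d f ->
  triple e f (cremona (hadamard l d)) = 0.
Proof.
move=> l0 ld dV He eV nde wd we f0 wf lf ndf only.
have d0 := nonvertex_neq0 dV.
set z := cross l d; set g := cremona (hadamard l d).
set n := dot d d * dot l l.
have n0 : n != 0 by rewrite mulf_neq0 // lt0r_neq0 // dot_gt0.
set T := dot w (cremona_polar d z); set K := dot w (cremona z).
have on_w x : dot l x = 0 ->
    n ^+ 2 * dot w (cremona x) = triple d x l * (triple x z l * T + triple d x l * K).
  move=> lx; rewrite -dotZr -cremonaZ line_param // dot_cremonaD wd mulr0 add0r.
  by rewrite /T /K; ring.
set s := triple f z l; set t := triple d f l.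
have t0 : t != 0.
  apply/eqP => t0; apply: ndf; apply: (proj_eqZ n0 f0).
  by rewrite line_param // -/s -/t t0 scale0r addr0.
have sTK : s * T + t * K = 0.
  by apply: (mulfI t0); rewrite mulr0 -on_w // wf mulr0.
have TK : T != 0 \/ K != 0.
  have [T0|] := eqVneq T 0; [right | by left]; apply/eqP => K0.
  apply: (meets_only_line_contra l0 d0 ld _ only) => x lx; apply: (mulfI (expf_neq0 2 n0)).
  by rewrite mulr0 on_w // T0 K0 !mulr0 addr0 mulr0.
apply: (mulfI n0); rewrite mulr0 -tripleZ2 line_param // tripleD2 !tripleZ2.
exact: comb_eq0_of_proportional sTK (cremona_conic_relation ld dV He eV nde wd we) TK.
Qed.

Lemma steiner_fixed_point l d : l != 0 -> dot l d = 0 -> ~ is_vertex d ->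
  exists2 g, g != 0 & steiner g = 0 /\ forall e f w,
    steiner e = 0 -> ~ is_vertex e -> ~ proj_eq d e ->
    dot w (cremona d) = 0 -> dot w (cremona e) = 0 ->
    f != 0 -> dot w (cremona f) = 0 -> dot l f = 0 -> ~ proj_eq d f -> meets_only w l d f ->
    triple e f g = 0.
Proof.
move=> l0 ld dV.
have [g0|g0] := eqVneq (cremona (hadamard l d)) 0; last first.
  exists (cremona (hadamard l d)) => //; split.
    by rewrite steiner_cremona_hadamard ld mulr0.
  by move=> e f w; exact: triple_second_meet.
have ld0 : hadamard l d = 0 by apply: cremona_eq0 g0; rewrite -ld; coords.
exists (row3 1 0 0).
  by apply/eqP => /rowP/(_ i0); rewrite !mxE /=; apply/eqP; exact: oner_neq0.
split; first by coords; ring.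
move=> e f w _ _ _ wd _ _ _ _ _ only; exfalso.
apply: (meets_only_line_contra l0 (nonvertex_neq0 dV) ld _ only) => x lx.
exact: conic_contains_side ld0 l0 dV lx wd.
Qed.

End ProjectivePlane.

Unset Implicit Arguments.

Theorem fact2p1 (R : realType) (Mh : 'M[R]_3) (l A B C D : 'rV[R]_3) :
  nondeg_conic Mh -> l != 0 ->
  A != 0 -> B != 0 -> C != 0 -> D != 0 ->
  on_conic Mh A -> on_conic Mh B -> on_conic Mh C -> on_line l D ->
  ~ proj_eq A B -> ~ proj_eq A C -> ~ proj_eq B C ->
  ~ proj_eq A D -> ~ proj_eq B D -> ~ proj_eq C D ->
  exists G : 'rV[R]_3, G != 0 /\ on_conic Mh G /\
    forall (E F : 'rV[R]_3) (Me : 'M[R]_3),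
      E != 0 -> on_conic Mh E ->
      ~ proj_eq A E -> ~ proj_eq B E -> ~ proj_eq C E -> ~ proj_eq D E ->
      is_conic Me ->
      on_conic Me A -> on_conic Me B -> on_conic Me C -> on_conic Me D ->
      on_conic Me E ->
      F != 0 -> on_conic Me F -> on_line l F -> ~ proj_eq D F ->
      (forall P : 'rV[R]_3, P != 0 -> on_conic Me P -> on_line l P ->
         proj_eq D P \/ proj_eq F P) ->
      collinear3 E F G.
Proof.
move=> [[sMh _] detMh] l0 A0 B0 C0 D0 hA hB hC hD nAB nAC nBC nAD nBD nCD.
have uMh : Mh \in unitmx by rewrite unitmxE unitfE.
have [uP onH] := steiner_frame sMh uMh A0 B0 C0 hA hB hC nAB nAC nBC.
set P := frame Mh A B C in uP onH *.
have fP : row_free P by rewrite row_free_unit.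
pose crd (X : 'rV[R]_3) := X *m invmx P.
have crdK X : crd X *m P = X by rewrite mulmxKV.
have crd_peq X Y : proj_eq (crd X) (crd Y) <-> proj_eq X Y.
  by rewrite -(proj_eq_mulmx _ _ uP) !crdK.
have crd_line X : on_line l X <-> dot (l *m P^T) (crd X) = 0.
  by rewrite -on_lineE -on_line_mulmx crdK.
have crd_vertex X : X != 0 -> ~ proj_eq A X -> ~ proj_eq B X -> ~ proj_eq C X ->
    ~ is_vertex (crd X).
  by move=> X0 nA nB nC /frame_vertex /(_ (esym (crdK X)) X0) [].
have lP0 : l *m P^T != 0 by rewrite mulmx_free_eq0 // row_free_unit unitmx_tr.
have [g g0 [Hg Hcol]] := steiner_fixed_point lP0 (proj1 (crd_line D) hD)
  (crd_vertex D D0 nAD nBD nCD).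
exists (g *m P); split; first by rewrite mulmx_free_eq0.
split; first exact/onH.
move=> E F Me E0 hE nAE nBE nCE nDE [sMe _] hAe hBe hCe hDe hEe F0 hFe hF nDF onlyF.
have [w onMe] := conic_through_frame Mh sMe hAe hBe hCe.
have onE X : on_conic Me X <-> dot w (cremona (crd X)) = 0 by rewrite -onMe crdK.
rewrite /collinear3 col_mx3 -(crdK E) -(crdK F) -mulmx_rows3 det_mulmx det_rows3.
rewrite (Hcol (crd E) (crd F) w) ?mul0r //.
- by apply/onH; rewrite crdK.
- exact: crd_vertex E E0 nAE nBE nCE.
- by rewrite crd_peq.
- exact/onE.
- exact/onE.
- by rewrite -(mulmx_free_eq0 _ fP) crdK.
- exact/onE.
- exact/crd_line.
- by rewrite crd_peq.
exact: meets_only_mulmx uP onMe onlyF.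
Qed.
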